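(* Consider the standard voter model in the dynamic graph model with exactly two opinions ($\kappa=2$), and let $\phi_i$ be a lower bound on the conductance of the graph used in round $i$. Fix an arbitrary $\hat t\ge 0$ and the set $s_{\hat t}$. Let $\tau^*=\min\{t' : \sum_{i=\hat t}^{t'}\phi_i\ge 129\cdot\mathrm{vol}(s_{\hat t})/d_{\min}\}$. Then $\Pr(T\le\tau^*+\hat t)\ge 1/2$. In particular, if the graph is static with conductance $\phi$, then $\Pr\big(T\le \frac{129\,\mathrm{vol}(s_{\hat t})}{\phi\, d_{\min}}+\hat t\big)\ge 1/2$.
   Context: Graphs are undirected on vertex set $V=\{1,\dots,n\}$; $d_u$ is the (time-invariant) degree of $u$, $d_{\min}$ the minimum degree, $m$ the number of edges, $\mathrm{vol}(U)=\sum_{u\in U}d_u$. Conductance: $\phi(G)=\min\{\sum_{u\in U}\lambda_u/\mathrm{vol}(U): U\subset V,\ 0<\mathrm{vol}(U)\le m\}$, where $\lambda_u$ is the number of neighbours of $u$ outside $U$. Dynamic graph model: an adversary chooses $G_1,G_2,\dots$ on $V$, knowing past opinions, such that node $j$ has degree $d_j$ in every $G_t$ and $G_t$ has conductance at least $\phi_t$, with $(\phi_t)$ fixed in advance. Standard voter model: in each round every node independently picks a uniformly random neighbour in the current graph and with probability $1/2$ adopts its opinion (as at the start of the round). $V_t^{(i)}$ is the set of nodes with opinion $i$ after $t$ rounds; $S_t$ is the one of $V_t^{(0)},V_t^{(1)}$ with smaller volume, $s_t$ a fixed value of it. $T$ is the consensus time, the first round after which all nodes hold the same opinion (equivalently $S_T=\emptyset$).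 *)

From mathcomp Require Import all_boot all_order all_algebra.
Set Implicit Arguments. Unset Strict Implicit. Unset Printing Implicit Defensive.
Import Order.TTheory GRing.Theory Num.Theory.
Local Open Scope ring_scope.

Section Voter.
Variable n : nat.

(* opinion configuration: opinion 0 = false, opinion 1 = true *)
Definition config := {ffun 'I_n -> bool}.

Definition nbrs (G : rel 'I_n) (u : 'I_n) : {set 'I_n} := [set v | G u v].

Definition is_dgraph (d : 'I_n -> nat) (G : rel 'I_n) : Prop :=
  [/\ forall u v, G u v = G v u, forall u, ~~ G u u & forall u, #|nbrs G u| = d u].

Definition vol (d : 'I_n -> nat) (U : {set 'I_n}) : nat := \sum_(u in U) d u.

Definition nedges (G : rel 'I_n) : nat :=
  #|[set e : 'I_n * 'I_n | G e.1 e.2 && (e.1 < e.2)%N]|.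

Definition lam (G : rel 'I_n) (U : {set 'I_n}) (u : 'I_n) : nat :=
  #|[set v | G u v & v \notin U]|.

(* conductance: min over U with 0 < vol U <= m of (sum_{u in U} lambda_u)/vol U
   (the neutral element 1 is only used if no such U exists) *)
Definition conductance (R : realFieldType) (d : 'I_n -> nat) (G : rel 'I_n) : R :=
  \big[Order.min/1]_(U : {set 'I_n} | (0 < vol d U)%N && (vol d U <= nedges G)%N)
     ((\sum_(u in U) lam G U u)%:R / (vol d U)%:R).

(* maximum degree (only used as neutral element for the minimum) *)
Definition dmax (d : 'I_n -> nat) : nat := \big[maxn/0%N]_(u : 'I_n) d u.

Definition dmin (d : 'I_n -> nat) : nat :=
  \big[minn/dmax d]_(u : 'I_n) d u.

Definition opset (x : config) (b : bool) : {set 'I_n} := [set u | x u == b].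

Definition Smin (d : 'I_n -> nat) (x : config) : {set 'I_n} :=
  if (vol d (opset x false) <= vol d (opset x true))%N then opset x false
  else opset x true.

Definition consensus (x : config) : bool := [forall u, forall v, x u == x v].

(* probability that one round of the standard voter model on graph G moves
   configuration x to configuration y: each node independently picks a uniform
   random neighbour and with probability 1/2 adopts its opinion *)
Definition step_prob (R : realFieldType) (G : rel 'I_n) (x y : config) : R :=
  \prod_(u : 'I_n)
     ((1/2) * (y u == x u)%:R
      + (1/2) * #|[set v in nbrs G u | x v == y u]|%:R / #|nbrs G u|%:R).

(* an (adaptive, deterministic) adversary: given the history x_0, ..., x_t of
   configurations it chooses the graph G_t used in the round from x_t to x_{t+1} *)
Definition strategy := seq config -> rel 'I_n.

(* G_t has degrees d and conductance at least phi t, for every history *)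
Definition admissible (R : realFieldType) (d : 'I_n -> nat) (phi : nat -> R)
  (strat : strategy) : Prop :=
  forall h : seq config, (0 < size h)%N ->
    is_dgraph d (strat h) /\ phi (size h).-1 <= conductance R d (strat h).

Definition cdef : config := [ffun _ => false].

Fixpoint cont_prob (R : realFieldType) (strat : strategy) (h c : seq config) : R :=
  match c with
  | [::] => 1
  | y :: c' => step_prob R (strat h) (last cdef h) y * cont_prob R strat (rcons h y) c'
  end.

(* Pr(T <= t + k | history h = (x_0, ..., x_t)) *)
Definition Pr_cons_by (R : realFieldType) (strat : strategy) (h : seq config) (k : nat) : R :=
  \sum_(c : k.-tuple config) cont_prob R strat h c * (has consensus (h ++ c))%:R.

End Voter.

(* The probability that no consensus is reached before a conductance budget [b] is
   spent is at most the potential f(20 vol(S) / (d_min b)), where S is the minority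
   set and f(z) = (5z - z^2)/4 on [0, 1], f = 1 beyond.  One round on a graph of
   conductance at least psi does not increase the expected potential while the budget
   drops to b - psi: after the round vol(S) <= W + In - Out, where W is the current
   minority volume and In, Out are the volumes of the nodes switching into and out of
   the current minority opinion.  In and Out depend on disjoint sets of independent
   nodes, both have mean L/2 for the cut size L, and Var(Out) >= d_min L/4 >=
   d_min psi W/4 by the conductance bound; the concavity of f turns this variance into
   the drift that pays for the smaller budget.  A budget of 128 vol(S)/d_min leaves a
   potential of at most (5/4)(20/128) < 1/2; the constant 129 of the statement also
   absorbs the last round of the window, whose conductance is at most 1. *)

From mathcomp Require Import all_boot all_order all_algebra.
From mathcomp Require Import ring lra zify.
Set Implicit Arguments. Unset Strict Implicit. Unset Printing Implicit Defensive.
Import Order.TTheory GRing.Theory Num.Theory.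
Local Open Scope ring_scope.

Section ProductMeasure.
Variables (R : realFieldType) (I T : finType) (p : I -> T -> R).

Definition expect (g : {ffun I -> T} -> R) : R :=
  \sum_(y : {ffun I -> T}) (\prod_i p i (y i)) * g y.

Definition mean (i : I) (a : T -> R) : R := \sum_t p i t * a t.

Lemma eq_expect g h : (forall y, g y = h y) -> expect g = expect h.
Proof. by move=> gh; apply: eq_bigr => y _; rewrite gh. Qed.

Lemma expectD g h : expect (fun y => g y + h y) = expect g + expect h.
Proof. by rewrite /expect -big_split; apply: eq_bigr => y _; rewrite mulrDr. Qed.

Lemma expectZ a g : expect (fun y => a * g y) = a * expect g.
Proof. by rewrite /expect mulr_sumr; apply: eq_bigr => y _; rewrite mulrCA. Qed.

Lemma expect_sumr (J : finType) (g : J -> {ffun I -> T} -> R) :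
  expect (fun y => \sum_j g j y) = \sum_j expect (g j).
Proof.
rewrite /expect exchange_big; apply: eq_bigr => y _ /=; exact: mulr_sumr.
Qed.

Lemma expect_le g h : (forall i t, 0 <= p i t) -> (forall y, g y <= h y) ->
  expect g <= expect h.
Proof.
move=> p_ge0 gh; apply: ler_sum => y _; apply: ler_wpM2l (gh y).
exact: prodr_ge0.
Qed.

Lemma expect_prod (f : I -> T -> R) :
  expect (fun y => \prod_i f i (y i)) = \prod_i mean i (f i).
Proof.
by rewrite bigA_distr_bigA /expect; apply: eq_bigr => y _; rewrite -big_split.
Qed.

Hypothesis p_sum1 : forall i, \sum_t p i t = 1.

Lemma mean1 i : mean i (fun _ => 1) = 1.
Proof. by rewrite /mean -[RHS](p_sum1 i); apply: eq_bigr => t _; rewrite mulr1. Qed.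

Lemma expect_cst c : expect (fun _ => c) = c.
Proof.
rewrite /expect -mulr_suml -bigA_distr_bigA big1 ?mul1r // => i _; exact: p_sum1.
Qed.

Lemma expect_coord i (a : T -> R) : expect (fun y => a (y i)) = mean i a.
Proof.
pose f j (t : T) := if j == i then a t else 1.
rewrite (@eq_expect _ (fun y => \prod_j f j (y j))); last first.
  by move=> y; rewrite (bigD1 i) //= /f eqxx big1 ?mulr1 // => j /negbTE ->.
rewrite expect_prod (bigD1 i) //= big1 ?mulr1.
  by rewrite /f; apply: eq_bigr => t _; rewrite eqxx.
by move=> j /negbTE ji; rewrite -(mean1 j); apply: eq_bigr => t _; rewrite /f ji.
Qed.

Lemma expect_coord2 i j (a b : T -> R) : i != j ->
  expect (fun y => a (y i) * b (y j)) = mean i a * mean j b.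
Proof.
move=> ij; have ji : (j == i) = false by rewrite eq_sym (negbTE ij).
pose f k (t : T) := if k == i then a t else if k == j then b t else 1.
rewrite (@eq_expect _ (fun y => \prod_k f k (y k))); last first.
  move=> y; rewrite (bigD1 i) //= (bigD1 j) /=; last by rewrite eq_sym.
  rewrite /f eqxx ji eqxx.
  by rewrite big1 ?mulr1 // => k /andP[/negbTE -> /negbTE ->].
rewrite expect_prod (bigD1 i) //= (bigD1 j) /=; last by rewrite eq_sym.
rewrite big1 ?mulr1.
  by congr (_ * _); apply: eq_bigr => t _; rewrite /f ?eqxx ?ji.
move=> k /andP[/negbTE ki /negbTE kj].
by rewrite -(mean1 k); apply: eq_bigr => t _; rewrite /f ki kj.
Qed.

Lemma expect_sum_coord (a : I -> T -> R) :
  expect (fun y => \sum_i a i (y i)) = \sum_i mean i (a i).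
Proof. by rewrite expect_sumr; apply: eq_bigr => i _; exact: expect_coord. Qed.

Lemma expect_mul_sum_coord (a b : I -> T -> R) :
  expect (fun y => (\sum_i a i (y i)) * (\sum_i b i (y i))) =
  (\sum_i mean i (a i)) * (\sum_i mean i (b i))
  + \sum_i (mean i (fun t => a i t * b i t) - mean i (a i) * mean i (b i)).
Proof.
have Eab i j : expect (fun y => a i (y i) * b j (y j)) =
    mean i (a i) * mean j (b j)
    + (i == j)%:R * (mean i (fun t => a i t * b i t) - mean i (a i) * mean i (b i)).
  have [<-|ij] := eqVneq i j; last by rewrite expect_coord2 // mul0r addr0.
  by rewrite (expect_coord i (fun t => a i t * b i t)) mul1r addrC subrK.
rewrite (@eq_expect _ (fun y => \sum_i \sum_j a i (y i) * b j (y j))); last first.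
  by move=> y; rewrite mulr_suml; apply: eq_bigr => i _; rewrite mulr_sumr.
rewrite expect_sumr mulr_suml -big_split; apply: eq_bigr => i _ /=.
rewrite expect_sumr mulr_sumr (eq_bigr _ (fun j _ => Eab i j)) big_split /=.
congr (_ + _); rewrite (bigD1 i) //= eqxx mul1r big1 ?addr0 // => j.
by rewrite eq_sym => /negbTE ->; rewrite mul0r.
Qed.

End ProductMeasure.

Lemma card_set_sum (T : finType) (P : pred T) : #|[set v | P v]| = (\sum_v P v)%N.
Proof. by rewrite -sum1dep_card big_mkcond /=; apply: eq_bigr => v _; case: (P v). Qed.

Lemma bigminn_le (I : finType) m (F : I -> nat) i : (\big[minn/m]_j F j <= F i)%N.
Proof.
have : i \in index_enum I by rewrite mem_index_enum.
elim: (index_enum I) => [|j r IH] //=; rewrite big_cons inE => /orP[/eqP<-|/IH h].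
  exact: geq_minl.
exact: leq_trans (geq_minr _ _) h.
Qed.

Section Graph.
Variables (n : nat) (d : 'I_n -> nat).

Lemma dmin_le u : (dmin d <= d u)%N.
Proof. exact: bigminn_le. Qed.

Lemma dmin_gt0 : (forall u, 0 < d u)%N -> (0 < n)%N -> (0 < dmin d)%N.
Proof.
case: n d => [//|n'] d' d_pos _.
have dmax_gt0 : (0 < dmax d')%N by apply: leq_trans (d_pos ord0) (@leq_bigmax _ d' ord0).
by apply: (big_ind (fun k => 0 < k)%N) => // k l k_gt0 l_gt0; rewrite leq_min k_gt0.
Qed.

Variable G : rel 'I_n.
Hypothesis G_d : is_dgraph d G.

Lemma degE u : d u = (\sum_v G u v)%N.
Proof. by case: G_d => _ _ <-; rewrite /nbrs card_set_sum. Qed.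

Lemma handshake : (\sum_u d u)%N = (2 * nedges G)%N.
Proof.
case: G_d => G_sym G_irr _.
have split_edge u v : (G u v : nat) = ((G u v && (u < v)) + (G u v && (v < u)))%N.
  case Guv: (G u v) => //=.
  have : u != v by apply: (contraNneq _ (G_irr u)) => uv; rewrite {2}uv Guv.
  by rewrite neq_ltn; case: ltngtP.
rewrite (eq_bigr _ (fun u _ => degE u)).
rewrite (eq_bigr (fun u => \sum_v (G u v && (u < v)%N) + \sum_v (G u v && (v < u)%N))%N);
  last by move=> u _; rewrite -big_split; apply: eq_bigr => v _; exact: split_edge.
rewrite big_split /= [X in (_ + X)%N]exchange_big /=.
under [X in (_ + X)%N]eq_bigr => u _ do under eq_bigr => v _ do rewrite G_sym.
by rewrite addnn -mul2n /nedges card_set_sum pair_big.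
Qed.

Definition minority (x : config n) : bool :=
  ~~ (vol d (opset x false) <= vol d (opset x true))%N.

Lemma SminE x : Smin d x = opset x (minority x).
Proof. by rewrite /Smin /minority; case: leqP. Qed.

Lemma vol_Smin_le x b : (vol d (Smin d x) <= vol d (opset x b))%N.
Proof.
rewrite /Smin; case: (leqP (vol d (opset x false)) (vol d (opset x true))) => h;
  by case: b => //; exact: ltnW.
Qed.

Lemma vol_opsetC x b :
  (vol d (opset x b) + vol d (opset x (~~ b)))%N = (\sum_u d u)%N.
Proof.
rewrite /vol (bigID (fun u => x u == b) predT) /=; congr (_ + _)%N; apply: eq_bigl => u;
  by rewrite !inE //; case: (x u); case: b.
Qed.

Lemma vol_Smin_le_nedges x : (vol d (Smin d x) <= nedges G)%N.
Proof.
have := vol_opsetC x (minority x); rewrite handshake -SminE.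
have := vol_Smin_le x (~~ minority x); lia.
Qed.

End Graph.

Lemma nonconsensus_op n (x : config n) b : ~~ consensus x -> exists u, x u = b.
Proof.
rewrite /consensus negb_forall => /existsP[u]; rewrite negb_forall => /existsP[v xuv].
have [xu|xub] := eqVneq (x u) b; first by exists u.
by exists v; move: xub xuv; case: (x u); case: (x v); case: b.
Qed.

Lemma dmin_le_vol_Smin n (d : 'I_n -> nat) (x : config n) :
  (forall u, 0 < d u)%N -> ~~ consensus x ->
  (0 < dmin d)%N /\ (dmin d <= vol d (Smin d x))%N.
Proof.
move=> d_pos nx; have [u xu] := nonconsensus_op (minority d x) nx.
split; first exact: dmin_gt0 d_pos (leq_ltn_trans (leq0n u) (ltn_ord u)).
apply: leq_trans (dmin_le d u) _.
by rewrite SminE /vol (bigD1 u) ?inE ?xu //= leq_addr.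
Qed.

Section Conductance.
Variables (R : realFieldType) (n : nat) (d : 'I_n -> nat) (G : rel 'I_n).

Lemma conductance_ge0 : 0 <= conductance R d G.
Proof. by apply: le_bigmin => // U _; apply: divr_ge0; rewrite ler0n. Qed.

Lemma conductance_le1 : conductance R d G <= 1.
Proof. exact: bigmin_le_id. Qed.

Lemma conductance_vol_le U : (0 < vol d U)%N -> (vol d U <= nedges G)%N ->
  conductance R d G * (vol d U)%:R <= (\sum_(u in U) lam G U u)%:R.
Proof.
move=> vol_gt0 vol_le; rewrite -ler_pdivlMr ?ltr0n //.
exact: (bigmin_le_cond _ (fun V : {set 'I_n} => (\sum_(u in V) lam G V u)%:R / (vol d V)%:R)
  (introT andP (conj vol_gt0 vol_le))).
Qed.

End Conductance.

Section Potential.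
Variable R : realFieldType.

Definition qpot (z : R) : R := (5 * z - z * z) / 4.

Definition pot (z : R) : R := if z <= 1 then qpot z else 1.

Lemma pot_le1 z : pot z <= 1.
Proof. rewrite /pot /qpot; case: ifPn => //; nra. Qed.

Lemma pot_ge0 z : 0 <= z -> 0 <= pot z.
Proof. rewrite /pot /qpot => z_ge0; case: ifPn => //; nra. Qed.

Lemma pot_le z1 z2 : 0 <= z1 -> z1 <= z2 -> pot z1 <= pot z2.
Proof. by rewrite /pot /qpot => ? ?; case: ifPn => ?; case: ifPn => ?; nra. Qed.

Lemma pot_le_lin z : 0 <= z -> pot z <= 5/4 * z.
Proof. by rewrite /pot /qpot => ?; case: ifPn => ?; nra. Qed.

Lemma pot_le_tangent z y0 : 0 <= z -> y0 <= 5/2 ->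
  pot z <= qpot y0 + (5/4 - y0/2) * (z - y0).
Proof.
rewrite /pot /qpot => z_ge0 y0_le; case: ifPn => z_le1.
  have : 0 <= (z - y0) ^+ 2 by exact: sqr_ge0.
  rewrite expr2; nra.
have : 0 <= (5/4 - y0/2) * (z - 1) by apply: mulr_ge0; lra.
have : 0 <= (1 - y0) ^+ 2 by exact: sqr_ge0.
rewrite expr2; nra.
Qed.

Lemma qpot_sub_le u v : 0 <= v -> v <= u -> qpot u - qpot v <= 5/4 * (u - v).
Proof. rewrite /qpot => ? ?; nra. Qed.

Lemma qpot_drift (W dm b psi V : R) :
  0 < dm -> dm <= W -> 0 <= psi -> psi <= 1 -> W <= dm / 20 * b ->
  dm * psi * W / 4 <= V ->
  qpot (W / (dm / 20 * (b - psi))) - V / (4 * (dm / 20 * (b - psi)) ^+ 2)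
    <= qpot (W / (dm / 20 * b)).
Proof.
move=> dm_gt0 dm_le psi_ge0 psi_le1 W_le V_ge.
have b_ge20 : 20 <= b by rewrite -(ler_pM2l dm_gt0); nra.
set b' := b - psi.
have b'_ge19 : 19 <= b' by rewrite /b'; lra.
have b'_neq0 : b' != 0 by apply/eqP; lra.
have b_neq0 : b != 0 by apply/eqP; lra.
have dm_neq0 : dm != 0 by apply/eqP; lra.
set u := W / (dm / 20 * b'); set v := W / (dm / 20 * b).
have v_ge0 : 0 <= v by apply: divr_ge0; nra.
have uvE : u - v = 20 * W * psi / (dm * b * b').
  by rewrite /u /v /b'; field; move: b'_neq0; rewrite /b' => ->; rewrite b_neq0 dm_neq0.
have v_le_u : v <= u by rewrite -subr_ge0 uvE; apply: divr_ge0; nra.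
have V_scaled : dm * psi * W / 4 / (4 * (dm / 20 * b') ^+ 2) <= V / (4 * (dm / 20 * b') ^+ 2).
  by apply: ler_wpM2r => //; rewrite invr_ge0; nra.
(* the variance term dominates the Lipschitz loss because b' <= b *)
have gapE : dm * psi * W / 4 / (4 * (dm / 20 * b') ^+ 2) - 5/4 * (u - v)
          = 25 * W * psi * (b - b') / (dm * b * b' ^+ 2).
  by rewrite uvE; field; rewrite b'_neq0 b_neq0 dm_neq0.
have gap_ge0 : 0 <= 25 * W * psi * (b - b') / (dm * b * b' ^+ 2).
  have : 0 < b' ^+ 2 by rewrite exprn_gt0 //; lra.
  by move=> ?; apply: divr_ge0; [apply: mulr_ge0; rewrite /b'; nra | nra].
have := qpot_sub_le v_ge0 v_le_u; lra.
Qed.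

Lemma tangent_point_le (dm W L b psi : R) :
  0 < dm -> dm <= W -> L <= W -> 0 <= psi -> psi <= 1 -> W <= dm / 20 * b ->
  0 < b - psi /\ (W + L / 2) / (dm / 20 * (b - psi)) <= 5/2.
Proof.
move=> dm_gt0 dm_le L_le psi_ge0 psi_le1 W_le.
have b_ge20 : 20 <= b by rewrite -(ler_pM2l dm_gt0); nra.
have c_gt0 : 0 < dm / 20 * (b - psi) by rewrite mulr_gt0 ?divr_gt0 //; lra.
split; first lra.
rewrite ler_pdivrMr //.
have : 0 <= dm * (b - 5/2 * psi) by rewrite mulr_ge0 //; lra.
lra.
Qed.

End Potential.

Section TangentMoments.
Variables (R : realFieldType) (I T : finType) (p : I -> T -> R).
Hypothesis p_sum1 : forall i, \sum_t p i t = 1.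

Lemma expect_qpot_tangent (Q P : {ffun I -> T} -> R) (A c cc V : R) :
  cc != 0 -> expect p Q = c -> expect p P = c ->
  expect p (fun y => Q y * Q y) = c ^+ 2 + V -> expect p (fun y => Q y * P y) = c ^+ 2 ->
  expect p (fun y => qpot (A - Q y / cc) + (5/4 - (A - Q y / cc) / 2) * ((P y - c) / cc))
    = qpot (A - c / cc) - V / (4 * cc ^+ 2).
Proof.
move=> cc_neq0 EQ EP EQQ EQP.
pose k0 : R := 5 * A / 4 - A ^+ 2 / 4 - (5/4 - A/2) * c / cc.
pose k1 : R := - 5 / (4 * cc) + A / (2 * cc) - c / (2 * cc ^+ 2).
pose k2 : R := (5/4 - A/2) / cc.
pose k3 : R := - 1 / (4 * cc ^+ 2).
pose k4 : R := 1 / (2 * cc ^+ 2).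
rewrite (@eq_expect _ _ _ _ _ (fun y => k0 + k1 * Q y + k2 * P y + k3 * (Q y * Q y)
                                        + k4 * (Q y * P y))); last first.
  by move=> y /=; rewrite /qpot /k0 /k1 /k2 /k3 /k4; field.
rewrite 4!expectD !expectZ expect_cst // EQ EP EQQ EQP /qpot /k0 /k1 /k2 /k3 /k4.
by field.
Qed.

End TangentMoments.

Section VoterRound.
Variables (R : realFieldType) (n : nat) (d : 'I_n -> nat) (G : rel 'I_n) (x : config n).

Definition nbr_op u (c : bool) : nat := #|[set v in nbrs G u | x v == c]|.

Definition adopt_prob u (c : bool) : R :=
  (1/2) * (c == x u)%:R + (1/2) * (nbr_op u c)%:R / #|nbrs G u|%:R.

Lemma step_prob_expect (F : config n -> R) :
  \sum_y step_prob R G x y * F y = expect adopt_prob F.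
Proof. by []. Qed.

Lemma adopt_prob_ge0 u c : 0 <= adopt_prob u c.
Proof.
have half_ge0 : 0 <= 1/2 :> R by lra.
apply: addr_ge0; first exact: mulr_ge0 half_ge0 (ler0n _ _).
by rewrite -mulrA; apply: mulr_ge0 half_ge0 (divr_ge0 (ler0n _ _) (ler0n _ _)).
Qed.

Lemma step_prob_ge0 y : 0 <= step_prob R G x y.
Proof. by apply: prodr_ge0 => u _; exact: adopt_prob_ge0. Qed.

Hypothesis G_d : is_dgraph d G.
Hypothesis d_pos : forall u, (0 < d u)%N.

Lemma nbr_opE u c : nbr_op u c = (\sum_v (G u v && (x v == c)))%N.
Proof. by rewrite -card_set_sum; apply: eq_card => v; rewrite !inE. Qed.

Lemma nbr_op_sum u : (nbr_op u true + nbr_op u false)%N = d u.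
Proof.
rewrite !nbr_opE -big_split (degE G_d) /=; apply: eq_bigr => v _.
by case: (G u v); case: (x v).
Qed.

Lemma nbr_op_le u c : (nbr_op u c <= d u)%N.
Proof. by rewrite -(nbr_op_sum u); case: c; lia. Qed.

Lemma card_nbrs u : #|nbrs G u| = d u.
Proof. by case: G_d. Qed.

Lemma deg_neq0 u : (d u)%:R != 0 :> R.
Proof. by rewrite pnatr_eq0 -lt0n d_pos. Qed.

Lemma adopt_prob_sum1 u : \sum_c adopt_prob u c = 1.
Proof.
rewrite big_bool /adopt_prob card_nbrs.
have nbrE : (nbr_op u false)%:R = (d u)%:R - (nbr_op u true)%:R :> R.
  by rewrite -(nbr_op_sum u) natrD addrC addKr.
by rewrite nbrE; have := deg_neq0 u; case: (x u) => /= du_neq0; field.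
Qed.

Lemma adopt_prob_switch u c : c != x u -> (d u)%:R * adopt_prob u c = (nbr_op u c)%:R / 2.
Proof.
move=> /negbTE cx; rewrite /adopt_prob cx card_nbrs /=.
by have := deg_neq0 u => du_neq0; field.
Qed.

Variable o : bool.

Definition outflow u (c : bool) : R := if x u == o then (d u)%:R * (c != o)%:R else 0.
Definition inflow u (c : bool) : R := if x u == o then 0 else (d u)%:R * (c == o)%:R.

Definition vol_out (y : config n) : R := \sum_u outflow u (y u).
Definition vol_in (y : config n) : R := \sum_u inflow u (y u).

Lemma vol_opset_step y :
  (vol d (opset y o))%:R = (vol d (opset x o))%:R + vol_in y - vol_out y :> R.
Proof.
rewrite /vol !natr_sum big_mkcond [X in _ = X + _ - _]big_mkcond /vol_in /vol_out.
rewrite -big_split -sumrB /=; apply: eq_bigr => u _.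
rewrite /inflow /outflow !inE; case: (x u); case: (y u); case: o => /=;
  by rewrite ?mulr0 ?mulr1 ?addr0 ?add0r ?subr0 ?sub0r ?subrr ?oppr0.
Qed.

Lemma vol_out_ge0 y : 0 <= vol_out y.
Proof. by apply: sumr_ge0 => u _; rewrite /outflow; case: eqP; rewrite ?mulr_ge0 ?ler0n. Qed.

Definition cut : nat := (\sum_u (if x u == o then nbr_op u (~~ o) else 0))%N.

Lemma cutE : cut = (\sum_u (if x u == o then 0 else nbr_op u o))%N.
Proof.
case: G_d => G_sym _ _.
rewrite /cut (eq_bigr (fun u => \sum_v ((x u == o) && G u v && (x v != o)) : nat)%N); last first.
  move=> u _; rewrite nbr_opE; case: eqP => _ /=; last by rewrite big1.
  by apply: eq_bigr => v _; case: (x v); case: o.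
rewrite [RHS](eq_bigr (fun u => \sum_v ((x u != o) && G u v && (x v == o)) : nat)%N); last first.
  by move=> u _; rewrite nbr_opE; case: eqP => _ /=; first by rewrite big1.
rewrite [RHS]exchange_big; apply: eq_bigr => u _; apply: eq_bigr => v _.
by rewrite G_sym; case: (x u == o); case: (x v == o); case: (G v u).
Qed.

Lemma cut_lam : (\sum_(u in opset x o) lam G (opset x o) u)%N = cut.
Proof.
rewrite /cut big_mkcond; apply: eq_bigr => u _; rewrite inE; case: eqP => // xu.
rewrite /lam /nbr_op; apply: eq_card => v; rewrite !inE; congr (_ && _).
by rewrite -xu; case: (x v); case: (x u).
Qed.

Lemma cut_le_vol : (cut <= vol d (opset x o))%N.
Proof.
rewrite /cut /vol [X in (_ <= X)%N]big_mkcond /=; apply: leq_sum => u _; rewrite inE.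
by case: eqP => // _; exact: nbr_op_le.
Qed.

Lemma mean_outflow u :
  mean adopt_prob u (outflow u) = if x u == o then (nbr_op u (~~ o))%:R / 2 else 0.
Proof.
rewrite /mean /outflow; case: eqP => [xu|_]; last by rewrite big1 // => c _; rewrite mulr0.
have := @adopt_prob_switch u (~~ o); rewrite xu.
by case: o xu => xu /(_ isT) sw; rewrite big_bool /= ?mulr0 ?mulr1 ?addr0 ?add0r mulrC.
Qed.

Lemma mean_inflow u :
  mean adopt_prob u (inflow u) = if x u == o then 0 else (nbr_op u o)%:R / 2.
Proof.
rewrite /mean /inflow; case: eqP => [_|xu]; first by rewrite big1 // => c _; rewrite mulr0.
have ox : o != x u by apply/eqP => ox; apply: xu; rewrite ox.
have := adopt_prob_switch ox.
by case: o xu ox => xu ox sw; rewrite big_bool /= ?mulr0 ?mulr1 ?addr0 ?add0r mulrC.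
Qed.

Lemma mean_outflow2 u :
  mean adopt_prob u (fun c => outflow u c * outflow u c)
  = if x u == o then (d u)%:R * (nbr_op u (~~ o))%:R / 2 else 0.
Proof.
rewrite /mean /outflow; case: eqP => [xu|_]; last by rewrite big1 // => c _; rewrite !mulr0.
have := @adopt_prob_switch u (~~ o); rewrite xu.
case: o xu => xu /(_ isT) /= sw; rewrite big_bool /= -[RHS]mulrA -sw;
  set P1 := adopt_prob u true; set P2 := adopt_prob u false; ring.
Qed.

Lemma sum_mean_outflow : \sum_u mean adopt_prob u (outflow u) = cut%:R / 2.
Proof.
rewrite /cut natr_sum mulr_suml; apply: eq_bigr => u _.
by rewrite mean_outflow; case: eqP; rewrite ?mul0r.
Qed.

Lemma sum_mean_inflow : \sum_u mean adopt_prob u (inflow u) = cut%:R / 2.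
Proof.
rewrite cutE natr_sum mulr_suml; apply: eq_bigr => u _.
by rewrite mean_inflow; case: eqP; rewrite ?mul0r.
Qed.

Definition var_out : R :=
  \sum_u (mean adopt_prob u (fun c => outflow u c * outflow u c)
          - mean adopt_prob u (outflow u) * mean adopt_prob u (outflow u)).

Lemma var_out_ge : (dmin d)%:R * cut%:R / 4 <= var_out.
Proof.
rewrite /var_out /cut natr_sum mulr_sumr mulr_suml; apply: ler_sum => u _.
rewrite mean_outflow2 mean_outflow; case: eqP => _; last by rewrite !mulr0 mul0r subr0.
have : (nbr_op u (~~ o))%:R <= (d u)%:R :> R by rewrite ler_nat nbr_op_le.
have : (dmin d)%:R <= (d u)%:R :> R by rewrite ler_nat dmin_le.
have : 0 <= (nbr_op u (~~ o))%:R :> R by rewrite ler0n.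
nra.
Qed.

Lemma expect_vol_out : expect adopt_prob vol_out = cut%:R / 2.
Proof. exact: (etrans (expect_sum_coord adopt_prob_sum1 _) sum_mean_outflow). Qed.

Lemma expect_vol_in : expect adopt_prob vol_in = cut%:R / 2.
Proof. exact: (etrans (expect_sum_coord adopt_prob_sum1 _) sum_mean_inflow). Qed.

Lemma expect_vol_out2 :
  expect adopt_prob (fun y => vol_out y * vol_out y) = (cut%:R / 2) ^+ 2 + var_out.
Proof.
by rewrite /vol_out (expect_mul_sum_coord adopt_prob_sum1) sum_mean_outflow expr2.
Qed.

Lemma expect_vol_out_in :
  expect adopt_prob (fun y => vol_out y * vol_in y) = (cut%:R / 2) ^+ 2.
Proof.
rewrite /vol_out /vol_in (expect_mul_sum_coord adopt_prob_sum1).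
rewrite sum_mean_outflow sum_mean_inflow expr2 big1 ?addr0 // => u _.
rewrite mean_outflow mean_inflow /mean big1 => [|c _]; last first.
  by rewrite /outflow /inflow; case: (x u == o); rewrite ?mul0r ?mulr0.
by case: eqP; rewrite ?mulr0 ?mul0r subrr.
Qed.

End VoterRound.

Lemma step_prob_sum1 (R : realFieldType) n (d : 'I_n -> nat) (G : rel 'I_n) (x : config n) :
  is_dgraph d G -> (forall u, 0 < d u)%N -> \sum_y step_prob R G x y = 1.
Proof.
move=> G_d d_pos; rewrite -(expect_cst (adopt_prob_sum1 R x G_d d_pos) 1).
by apply: eq_bigr => y _; rewrite mulr1.
Qed.

Lemma conductance_vol_le_cut (R : realFieldType) n (d : 'I_n -> nat) G (x : config n) :
  is_dgraph d G -> (forall u, 0 < d u)%N -> ~~ consensus x ->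
  conductance R d G * (vol d (Smin d x))%:R <= (cut G x (minority d x))%:R.
Proof.
move=> G_d d_pos nx; have [dm_gt0 dm_le] := dmin_le_vol_Smin d_pos nx.
rewrite -cut_lam -SminE; apply: conductance_vol_le (vol_Smin_le_nedges G_d x).
exact: leq_trans dm_gt0 dm_le.
Qed.

Section BudgetPotential.
Variables (R : realFieldType) (n : nat) (d : 'I_n -> nat).

Definition budget_pot (z : config n) (b : R) : R :=
  if b <= 0 then 1 else pot ((vol d (Smin d z))%:R / ((dmin d)%:R / 20 * b)).

Lemma budget_pot_le1 z b : budget_pot z b <= 1.
Proof. by rewrite /budget_pot; case: ifP => // _; exact: pot_le1. Qed.

Lemma budget_pot_ge0 z b : 0 <= budget_pot z b.
Proof.
rewrite /budget_pot; case: ifPn => //; rewrite -ltNge => b_gt0.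
by apply/pot_ge0/divr_ge0; rewrite ?ler0n // mulr_ge0 ?divr_ge0 ?ler0n // ltW.
Qed.

Variables (G : rel 'I_n) (x : config n).
Hypothesis G_d : is_dgraph d G.
Hypothesis d_pos : forall u, (0 < d u)%N.

Lemma budget_pot_le_tangent o b y : 0 < b -> (0 < dmin d)%N ->
  let cc := (dmin d)%:R / 20 * b in
  let A := ((vol d (opset x o))%:R + (cut G x o)%:R / 2) / cc in
  let y0 := A - vol_out R d x o y / cc in
  A <= 5/2 ->
  budget_pot y b <= qpot y0 + (5/4 - y0 / 2) * ((vol_in R d x o y - (cut G x o)%:R / 2) / cc).
Proof.
move=> b_gt0 dm_gt0 cc A y0 A_le.
have cc_gt0 : 0 < cc by rewrite mulr_gt0 ?divr_gt0 ?ltr0n.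
rewrite /budget_pot (_ : b <= 0 = false) -/cc; last by rewrite leNgt b_gt0.
have V_le : (vol d (Smin d y))%:R / cc <= (vol d (opset y o))%:R / cc.
  by rewrite ler_pM2r ?invr_gt0 // ler_nat vol_Smin_le.
apply: le_trans (pot_le (divr_ge0 (ler0n _ _) (ltW cc_gt0)) V_le) _.
have y0_le : y0 <= 5/2.
  have := vol_out_ge0 R d x o y; rewrite /y0 => out_ge0.
  suff : 0 <= vol_out R d x o y / cc by lra.
  exact: divr_ge0 out_ge0 (ltW cc_gt0).
apply: le_trans (pot_le_tangent (divr_ge0 (ler0n _ _) (ltW cc_gt0)) y0_le) _.
rewrite (vol_opset_step R d x o y) /y0 /A le_eqVlt; apply/orP; left; apply/eqP.
by congr (_ + _ * _); field; rewrite gt_eqF.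
Qed.

Lemma budget_pot_step psi b : ~~ consensus x -> 0 <= psi -> psi <= conductance R d G ->
  \sum_y step_prob R G x y * budget_pot y (b - psi) <= budget_pot x b.
Proof.
move=> nx psi_ge0 psi_le_cond; rewrite step_prob_expect.
have p_sum1 := adopt_prob_sum1 R x G_d d_pos.
have p_ge0 := adopt_prob_ge0 R G x.
have E_le1 : expect (adopt_prob R G x) (fun y => budget_pot y (b - psi)) <= 1.
  rewrite -[X in _ <= X](expect_cst p_sum1 1).
  exact: expect_le p_ge0 (fun y => budget_pot_le1 y _).
rewrite [X in _ <= X]/budget_pot; case: ifPn => [_|]; first exact: E_le1.
rewrite -ltNge => b_gt0.
have [dm_gt0 dm_le_W] := dmin_le_vol_Smin d_pos nx.
have cut_ge := conductance_vol_le_cut R G_d d_pos nx.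
rewrite SminE in dm_le_W cut_ge *.
set o := minority d x in dm_le_W cut_ge *; set W := vol d (opset x o) in dm_le_W cut_ge *.
set dm := dmin d in dm_gt0 dm_le_W *; set L := cut G x o in cut_ge.
rewrite /pot; case: ifPn => [ratio_le1|_]; last exact: E_le1.
have dmR_gt0 : 0 < dm%:R :> R by rewrite ltr0n.
have dm_le_WR : dm%:R <= W%:R :> R by rewrite ler_nat.
have W_le_b : W%:R <= dm%:R / 20 * b.
  by move: ratio_le1; rewrite ler_pdivrMr ?mul1r // mulr_gt0 ?divr_gt0.
have psi_le1 := le_trans psi_le_cond (conductance_le1 R d G).
have psiW_le : psi * W%:R <= L%:R by apply: le_trans cut_ge; rewrite ler_wpM2r ?ler0n.
have L_le_W : L%:R <= W%:R :> R by rewrite ler_nat cut_le_vol.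
have [b'_gt0 A_le] := tangent_point_le dmR_gt0 dm_le_WR L_le_W psi_ge0 psi_le1 W_le_b.
set cc := dm%:R / 20 * (b - psi) in A_le *.
have cc_gt0 : 0 < cc by rewrite mulr_gt0 ?divr_gt0.
have tangent_le y := @budget_pot_le_tangent o (b - psi) y b'_gt0 dm_gt0 A_le.
apply: le_trans (expect_le p_ge0 tangent_le) _.
rewrite (expect_qpot_tangent p_sum1 _ (negbT (gt_eqF cc_gt0))
  (expect_vol_out R x G_d d_pos o) (expect_vol_in R x G_d d_pos o)
  (expect_vol_out2 R x G_d d_pos o) (expect_vol_out_in R x G_d d_pos o)).
rewrite (_ : (W%:R + L%:R / 2) / cc - L%:R / 2 / cc = W%:R / cc); last first.
  by field; rewrite gt_eqF.
apply: qpot_drift => //; apply: le_trans (var_out_ge R x G_d d_pos o).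
rewrite -/dm -/L; nra.
Qed.

End BudgetPotential.

Lemma sum_tupleS (R : realFieldType) (T : finType) k (F : seq T -> R) :
  \sum_(c : k.+1.-tuple T) F c = \sum_(y : T) \sum_(c : k.-tuple T) F (y :: c).
Proof.
rewrite (reindex (fun p : T * k.-tuple T => [tuple of p.1 :: p.2])) /=.
  by rewrite -(pair_big predT predT (fun y (c : k.-tuple T) => F (y :: c))).
exists (fun c => (thead c, [tuple of behead c])).
  by case=> y c _ /=; congr (_, _); apply: val_inj.
by move=> c _; rewrite [in RHS](tuple_eta c).
Qed.

Lemma last_in (T : eqType) (x0 : T) (h : seq T) : (0 < size h)%N -> last x0 h \in h.
Proof. by case: h => // x h _; exact: (mem_last x h). Qed.

Section ConsensusProbability.
Variables (R : realFieldType) (n : nat) (strat : strategy n).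

Definition Pr_nocons_by (h : seq (config n)) (k : nat) : R :=
  \sum_(c : k.-tuple (config n)) cont_prob R strat h c * (~~ has (@consensus n) (h ++ c))%:R.

Lemma cont_prob_ge0 h c : 0 <= cont_prob R strat h c.
Proof.
elim: c h => [|y c IH] h /=; first exact: ler01.
by rewrite mulr_ge0 ?IH //; exact: step_prob_ge0.
Qed.

Lemma Pr_nocons_byS h k : Pr_nocons_by h k.+1 =
  \sum_y step_prob R (strat h) (last (cdef n) h) y * Pr_nocons_by (rcons h y) k.
Proof.
rewrite /Pr_nocons_by (sum_tupleS _
  (fun c => cont_prob R strat h c * (~~ has (@consensus n) (h ++ c))%:R)); apply: eq_bigr => y _.
by rewrite mulr_sumr; apply: eq_bigr => c _ /=; rewrite -cat_rcons mulrA.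
Qed.

Lemma Pr_nocons_by_has h k : has (@consensus n) h -> Pr_nocons_by h k = 0.
Proof. by move=> hc; apply: big1 => c _; rewrite has_cat hc mulr0. Qed.

Hypothesis step_sum1 : forall h, (0 < size h)%N ->
  \sum_y step_prob R (strat h) (last (cdef n) h) y = 1.

Lemma cont_prob_sum1 k h : (0 < size h)%N ->
  \sum_(c : k.-tuple (config n)) cont_prob R strat h c = 1.
Proof.
elim: k h => [|k IH] h h_gt0.
  by rewrite (big_pred1 [tuple]) // => c; apply/esym/eqP; exact: tuple0.
rewrite (sum_tupleS _ (cont_prob R strat h)) -(step_sum1 h_gt0); apply: eq_bigr => y _.
by rewrite -mulr_sumr IH ?mulr1 // size_rcons.
Qed.

Lemma Pr_cons_byE h k : (0 < size h)%N -> Pr_cons_by R strat h k = 1 - Pr_nocons_by h k.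
Proof.
move=> h_gt0; rewrite /Pr_cons_by /Pr_nocons_by -[X in X - _](cont_prob_sum1 k h_gt0) -sumrB.
apply: eq_bigr => c _.
by case: (has (@consensus n) (h ++ c)); rewrite /= ?mulr0 ?mulr1 ?subr0 ?subrr.
Qed.

Lemma Pr_nocons_by_le1 h k : (0 < size h)%N -> Pr_nocons_by h k <= 1.
Proof.
move=> h_gt0; rewrite -[X in _ <= X](cont_prob_sum1 k h_gt0); apply: ler_sum => c _.
by have := cont_prob_ge0 h c; case: has; rewrite ?mulr1 ?mulr0.
Qed.

End ConsensusProbability.

Section NonconsensusBounds.
Variables (R : realFieldType) (n : nat) (d : 'I_n -> nat).
Hypothesis d_pos : forall u, (0 < d u)%N.

Lemma vol_Smin_ratio_ge1 (x : config n) : ~~ consensus x ->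
  0 < (dmin d)%:R :> R /\ 1 <= (vol d (Smin d x))%:R / (dmin d)%:R :> R.
Proof.
move=> nx; have [dm_gt0 dm_le] := dmin_le_vol_Smin d_pos nx.
have dmR_gt0 : 0 < (dmin d)%:R :> R by rewrite ltr0n.
by split; rewrite // ler_pdivlMr // mul1r ler_nat.
Qed.

Lemma budget_pot_le_half (x : config n) (b : R) : ~~ consensus x ->
  128 * (vol d (Smin d x))%:R / (dmin d)%:R <= b -> budget_pot d x b <= 1/2.
Proof.
move=> nx b_ge; have [dm_gt0 ratio_ge1] := vol_Smin_ratio_ge1 nx.
move: b_ge ratio_ge1; rewrite -mulrA.
set M := (vol d (Smin d x))%:R; set dm := (dmin d)%:R => b_ge ratio_ge1.
have b_gt0 : 0 < b by lra.
have c_gt0 : 0 < dm / 20 * b by rewrite mulr_gt0 ?divr_gt0.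
rewrite /budget_pot (_ : b <= 0 = false); last by rewrite leNgt b_gt0.
apply: le_trans (pot_le_lin (divr_ge0 (ler0n _ _) (ltW c_gt0))) _.
have : M / (dm / 20 * b) <= 20 / 128.
  rewrite ler_pdivrMr // {1}(_ : M = M / dm * dm); last by field; rewrite gt_eqF.
  nra.
lra.
Qed.

End NonconsensusBounds.

Section BudgetBound.
Variables (R : realFieldType) (n : nat) (d : 'I_n -> nat) (strat : strategy n) (psi : nat -> R).
Hypothesis d_pos : forall u, (0 < d u)%N.
Hypothesis strat_psi : forall h, (0 < size h)%N ->
  [/\ is_dgraph d (strat h), 0 <= psi (size h).-1 & psi (size h).-1 <= conductance R d (strat h)].

Let step_sum1 h : (0 < size h)%N -> \sum_y step_prob R (strat h) (last (cdef n) h) y = 1.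
Proof. by case/strat_psi => G_d _ _; exact: step_prob_sum1 G_d d_pos. Qed.

Lemma Pr_nocons_by_le_pot k h t : size h = t.+1 ->
  Pr_nocons_by R strat h k <= budget_pot d (last (cdef n) h) (\sum_(t <= i < t + k) psi i).
Proof.
elim: k h t => [|k IH] h t h_size.
  by rewrite addn0 big_geq // /budget_pot lexx Pr_nocons_by_le1 // h_size.
have h_gt0 : (0 < size h)%N by rewrite h_size.
have [hc|hnc] := boolP (has (@consensus n) h).
  by rewrite Pr_nocons_by_has //; exact: budget_pot_ge0.
have nx : ~~ consensus (last (cdef n) h).
  by apply: contra hnc => xc; apply/hasP; exists (last (cdef n) h); rewrite ?last_in.
have [G_d psi_ge0 psi_le] := strat_psi h_gt0; rewrite h_size /= in psi_ge0 psi_le.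
have budgetS : \sum_(t <= i < t + k.+1) psi i - psi t = \sum_(t.+1 <= i < t.+1 + k) psi i.
  rewrite addSnnS big_ltn; last by rewrite addnS ltnS leq_addr.
  by rewrite addrAC subrr add0r.
rewrite Pr_nocons_byS; apply: le_trans (budget_pot_step G_d d_pos _ nx psi_ge0 psi_le).
apply: ler_sum => y _; rewrite budgetS ler_wpM2l ?step_prob_ge0 //.
by have := IH (rcons h y) t.+1; rewrite size_rcons h_size last_rcons; apply.
Qed.

Lemma Pr_cons_by_ge_half h t k : size h = t.+1 ->
  (~~ consensus (last (cdef n) h) ->
     128 * (vol d (Smin d (last (cdef n) h)))%:R / (dmin d)%:R <= \sum_(t <= i < t + k) psi i) ->
  1/2 <= Pr_cons_by R strat h k.
Proof.
move=> h_size budget_ge.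
have h_gt0 : (0 < size h)%N by rewrite h_size.
rewrite (Pr_cons_byE step_sum1 _ h_gt0).
have [xc|nx] := boolP (consensus (last (cdef n) h)).
  rewrite Pr_nocons_by_has; first lra.
  by apply/hasP; exists (last (cdef n) h); rewrite ?last_in.
have := Pr_nocons_by_le_pot k h_size.
have := budget_pot_le_half d_pos nx (budget_ge nx); lra.
Qed.

End BudgetBound.


Lemma admissible_le1 (R : realFieldType) n (d : 'I_n -> nat) (phi : nat -> R) strat :
  admissible d phi strat -> forall i, phi i <= 1.
Proof.
move=> adm i; have [_ phi_le] := adm (nseq i.+1 (cdef n)) isT.
by rewrite size_nseq in phi_le; exact: le_trans phi_le (conductance_le1 R d _).
Qed.

Lemma window_budget (R : realFieldType) (that N : nat) (r phi : R) :
  1 <= r -> 0 < phi -> phi <= 1 -> that%:R + 129 * (r / phi) < N.+1%:R ->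
  128 * r <= phi *+ (N - that).
Proof.
move=> r_ge1 phi_gt0 phi_le1 N_gt.
have : 0 <= 129 * (r / phi) by rewrite mulr_ge0 ?divr_ge0 //; lra.
move=> window_ge0; have that_le_N : (that <= N)%N by rewrite -ltnS -(ltr_nat R); lra.
rewrite -[phi *+ _]mulr_natr natrB //.
have : 129 * (r / phi) < N.+1%:R - that%:R by lra.
rewrite mulrA ltr_pdivrMr // -addn1 natrD; nra.
Qed.

Unset Implicit Arguments.

Theorem lemma2 (R : realFieldType) (n : nat) (d : 'I_n -> nat)
  (d_pos : forall u, (0 < d u)%N) :
  (* dynamic graphs with conductance lower bounds phi *)
  (forall (phi : nat -> R) (strat : strategy n),
     admissible d phi strat ->
     forall (that : nat) (h : seq (config n)), size h = that.+1 ->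
     forall tau : nat,
       let X := 129 * (vol d (Smin d (last (cdef n) h)))%:R / (dmin d)%:R in
       X <= \sum_(that <= i < that + tau.+1) phi i ->
       (forall tau' : nat, (tau' < tau)%N ->
          \sum_(that <= i < that + tau'.+1) phi i < X) ->
       1/2 <= Pr_cons_by R strat h tau)
  /\
  (* static graph with conductance phi *)
  (forall G : rel 'I_n, is_dgraph d G -> 0 < conductance R d G ->
     forall (that : nat) (h : seq (config n)), size h = that.+1 ->
     forall N : nat,
       let B := that%:R + 129 * (vol d (Smin d (last (cdef n) h)))%:R
                          / (conductance R d G * (dmin d)%:R) in
       N%:R <= B < N.+1%:R ->
       1/2 <= Pr_cons_by R (fun _ => G) h (N - that)).
Proof.
split.
- move=> phi strat adm that h h_size tau X X_le _.
  pose psi i := Num.max 0 (phi i).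
  apply: (@Pr_cons_by_ge_half R n d strat psi d_pos _ h that tau h_size)
    => [h' /adm[G_d phi_le]|nx].
    by split; rewrite // ?le_max ?lexx // ge_max conductance_ge0 phi_le.
  have [_ ratio_ge1] := vol_Smin_ratio_ge1 R d_pos nx.
  have phi_last_le1 := admissible_le1 adm (that + tau).
  have phi_le_psi : \sum_(that <= i < that + tau) phi i <= \sum_(that <= i < that + tau) psi i.
    by apply: ler_sum => i _; rewrite le_max lexx orbT.
  move: X_le; rewrite /X addnS big_nat_recr ?leq_addr //= -!mulrA; lra.
- move=> G G_d cond_gt0 that h h_size N B B_window.
  apply: (@Pr_cons_by_ge_half R n d (fun=> G) (fun=> conductance R d G) d_pos _ h that)
    => // [h' _|nx]; first by split; rewrite ?conductance_ge0.
  have [dm_gt0 ratio_ge1] := vol_Smin_ratio_ge1 R d_pos nx.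
  move: B_window; rewrite /B sumr_const_nat addKn -mulrA.
  set M := (vol d _)%:R; set dm := (dmin d)%:R; set phi := conductance R d G.
  rewrite (_ : M / (phi * dm) = M / dm / phi); last by field; rewrite !gt_eqF.
  move=> /andP[_ window]; rewrite -mulrA.
  by apply: window_budget window => //; exact: conductance_le1.
Qed.
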